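(* For $0<r<1$ and $c>0$, the topological space $\mathbb{Z}((T))_{r,\le c}$ is compact.
   Context: $\mathbb{Z}((T))_{r,\le c}$ is the set of integer Laurent series $\sum_{n\gg-\infty}a_nT^n$ ($a_n\in\mathbb{Z}$, $a_n=0$ for $n$ sufficiently negative) with $\sum|a_n|r^n\le c$, with the $T$-adic topology given by the norm $\|f\|=\delta^{v_T(f)}$ for fixed $\delta\in(0,1)$, $v_T(f)$ being the smallest index of a nonzero coefficient. *)

From HB Require Import structures.
From mathcomp Require Import all_boot all_order all_algebra.
From mathcomp Require Import boolp classical_sets reals.
Set Implicit Arguments. Unset Strict Implicit. Unset Printing Implicit Defensive.
Import Order.TTheory GRing.Theory Num.Theory.
Local Open Scope ring_scope.
Local Open Scope classical_set_scope.

(* An integer Laurent series sum_n a_n T^n is represented by its coefficient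
   function a : int -> int, required to vanish for n sufficiently negative. *)
Definition laurent (a : int -> int) : Prop :=
  exists N : int, forall n : int, n < N -> a n = 0.

Definition vT_is (h : int -> int) (v : int) : Prop :=
  h v != 0 /\ forall n : int, n < v -> h n = 0.

Definition Tnorm {R : realType} (delta : R) (h : int -> int) : R :=
  match pselect (exists v, vT_is h v) with
  | left P => delta ^ (projT1 (cid P))
  | right _ => 0
  end.

Definition Topen {R : realType} (delta : R) (U : set (int -> int)) : Prop :=
  forall f, laurent f -> U f ->
    exists2 e : R, 0 < e &
      forall g, laurent g -> Tnorm delta (fun n => f n - g n) < e -> U g.

Definition Tcompact {R : realType} (delta : R) (S : set (int -> int)) : Prop :=
  forall F : set (set (int -> int)),
    (forall U, F U -> Topen delta U) ->
    (forall f, S f -> exists2 U, F U & U f) ->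
    exists (n : nat) (G : nat -> set (int -> int)),
      (forall i, (i < n)%N -> F (G i)) /\
      (forall f, S f -> exists2 i, (i < n)%N & G i f).

(* Z((T))_{r, <= c}: Laurent series with sum_n |a_n| r^n <= c.  The series has
   nonnegative terms, so its sum is <= c iff every finite partial sum over a
   window [N, N + K) of indices is <= c. *)
Definition ZTrc {R : realType} (r c : R) : set (int -> int) :=
  [set a | laurent a /\
     forall (N : int) (K : nat),
       \sum_(k < K) (`|a (N + k%:Z)|%:~R * r ^ (N + k%:Z)) <= c].

From HB Require Import structures.
From mathcomp Require Import all_boot all_order all_algebra.
From mathcomp Require Import boolp classical_sets reals.
From mathcomp Require Import lra zify.
Set Implicit Arguments. Unset Strict Implicit. Unset Printing Implicit Defensive.
Import Order.TTheory GRing.Theory Num.Theory.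
Local Open Scope ring_scope.
Local Open Scope classical_set_scope.

(* Suppose an open cover of Z((T))_{r,<=c} has no finite subcover.  All its
   elements vanish below a common index (there c < r^n, while |a_n| r^n <= c),
   and the coefficient of index m is bounded by c r^-m; hence the cylinder of
   series with prescribed coefficients up to m splits into finitely many
   cylinders of the next level, one of which again has no finite subcover.
   Iterating yields a branch f, which lies in Z((T))_{r,<=c} because the
   defining inequalities involve finitely many coefficients at a time.  A
   member of the cover contains a T-adic ball around f, and that ball contains
   a whole cylinder of the branch: a contradiction. *)

Lemma bernoulli_ineq (R : realDomainType) (t : R) (n : nat) :
  0 <= t -> 1 + n%:R * t <= (1 + t) ^+ n.
Proof.
move=> t_ge0; elim: n => [|n IH]; first by rewrite mul0r addr0 expr0.
have n_ge0 : 0 <= n%:R :> R := ler0n R n.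
rewrite exprSr -natr1; nra.
Qed.

Lemma exprn_unbounded (R : archiRealFieldType) (x e : R) :
  1 < x -> exists K : nat, e < x ^+ K.
Proof.
move=> x_gt1; set t := x - 1; have t_gt0 : 0 < t by rewrite subr_gt0.
have et_ge0 : 0 <= `|e| / t by rewrite divr_ge0 // ltW.
set K := Num.bound (`|e| / t); exists K.
have lt_eK : `|e| < K%:R * t by rewrite -ltr_pdivrMr // archi_boundP.
have := bernoulli_ineq K (ltW t_gt0); rewrite addrCA subrr addr0.
have := ler_norm e; lra.
Qed.

Lemma exprz_lt_eventually (R : archiRealFieldType) (q e : R) :
  0 < q -> q < 1 -> 0 < e -> exists m : int, forall n, m <= n -> q ^ n < e.
Proof.
move=> q_gt0 q_lt1 e_gt0.
have [K lt_eK] : exists K : nat, e^-1 < q^-1 ^+ K.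
  by apply: exprn_unbounded; rewrite invf_gt1.
exists K%:Z => n le_Kn.
rewrite -ltf_pV2 ?posrE ?exprz_gt0 // invr_expz -exprz_inv.
apply: lt_le_trans lt_eK _; apply: ler_weXz2l le_Kn.
by rewrite invf_ge1 // ltW.
Qed.

Section FiniteCovers.
Variables (T : Type) (F : set (set T)).

Definition finitely_covered (A : set T) : Prop :=
  exists (n : nat) (G : nat -> set T),
    (forall i, (i < n)%N -> F (G i)) /\
    (forall x, A x -> exists2 i, (i < n)%N & G i x).

Lemma finitely_covered_sub A B :
  A `<=` B -> finitely_covered B -> finitely_covered A.
Proof. by move=> AB [n [G [FG BG]]]; exists n, G; split=> // x /AB /BG. Qed.

Lemma finitely_covered1 U A : F U -> A `<=` U -> finitely_covered A.
Proof. by move=> FU AU; exists 1%N, (fun=> U); split=> // x /AU; exists 0%N. Qed.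

Lemma finitely_covered_setU A B :
  finitely_covered A -> finitely_covered B -> finitely_covered (A `|` B).
Proof.
move=> [n1 [G1 [FG1 AG1]]] [n2 [G2 [FG2 BG2]]].
exists (n1 + n2)%N, (fun i => if (i < n1)%N then G1 i else G2 (i - n1)%N).
split=> [i lt_i|x [/AG1 [i lt_i G1x]|/BG2 [i lt_i G2x]]].
- by case: ifP => [/FG1 //|ge_i]; apply: FG2; lia.
- by exists i; [lia | rewrite lt_i].
- by exists (i + n1)%N; [lia | rewrite ifF ?addnK //; lia].
Qed.

Lemma finitely_covered_bigcup (C : nat -> set T) n :
  (forall i, (i < n)%N -> finitely_covered (C i)) ->
  finitely_covered (\bigcup_(i in `I_n) C i).
Proof.
elim: n => [|n IH] C_cov; first by exists 0%N, (fun=> set0); split=> // x [].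
apply: finitely_covered_sub
  (finitely_covered_setU (IH _) (C_cov n _)) => [x [i /= lt_in Cix]|i lt_in|//].
- have [lt_i|eq_in] : (i < n)%N \/ i = n by lia.
    by left; exists i.
  by right; rewrite -eq_in.
- by apply: C_cov; rewrite ltnS ltnW.
Qed.

Lemma not_finitely_covered_neq0 A : ~ finitely_covered A -> A !=set0.
Proof.
apply: contra_notP => /forallNP A0.
by exists 0%N, (fun=> set0); split=> // x /A0.
Qed.

End FiniteCovers.

Section Cylinders.
Variable A : Type.

Definition cylinder (h : int -> A) (m : int) : set (int -> A) :=
  [set g | forall n, n <= m -> g n = h n].

Lemma cylinder_le h m m' : m <= m' -> cylinder h m' `<=` cylinder h m.
Proof. by move=> le_mm' g gh n le_nm; apply: gh; apply: le_trans le_mm'. Qed.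

Lemma cylinder_eq h h' m : cylinder h m h' -> cylinder h' m = cylinder h m.
Proof.
move=> h'h; apply/seteqP; split=> g gh n le_nm; rewrite gh //.
  exact: h'h.
by rewrite h'h.
Qed.

End Cylinders.

Section Branch.
Variables (A : Type) (P : (int -> A) -> int -> Prop).
Hypothesis P_cylinder : forall h h' m, cylinder h m h' -> P h m -> P h' m.
Hypothesis P_extend :
  forall h m, P h m -> exists2 h', cylinder h m h' & P h' (m + 1).

Section Prefixes.
Variables (ext : (int -> A) -> int -> int -> A) (h0 : int -> A) (m0 : int).
Hypothesis ext_cylinder : forall h m, cylinder h m (ext h m).

Fixpoint prefix (k : nat) : int -> A :=
  if k is k'.+1 then ext (prefix k') (m0 + k'%:Z) else h0.

Lemma prefix_cylinder k k' :
  (k <= k')%N -> cylinder (prefix k) (m0 + k%:Z) (prefix k').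
Proof.
move=> /subnK <-; elim: (k' - k)%N => [//|j IH] n le_n.
by rewrite addSn /= ext_cylinder ?IH //; lia.
Qed.

Definition branch n := prefix `|n - m0|%N n.

Lemma branch_cylinder k : cylinder (prefix k) (m0 + k%:Z) branch.
Proof.
move=> n le_n; rewrite /branch.
have [le_k|/ltnW le_k] := leqP k `|n - m0|%N; first exact: prefix_cylinder.
by rewrite (prefix_cylinder le_k) //; lia.
Qed.

End Prefixes.

Lemma exists_branch h0 m0 : P h0 m0 -> exists f, forall m, m0 <= m -> P f m.
Proof.
move=> P0.
(* Keeping h when ~ P h m makes the extension function total. *)
have /choice [e e_spec] : forall hm : (int -> A) * int, exists h',
    cylinder hm.1 hm.2 h' /\ (P hm.1 hm.2 -> P h' (hm.2 + 1)).
  move=> [h m]; have [/P_extend [h' ? ?]|nPh] := pselect (P h m).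
    by exists h'.
  by exists h; split=> [n|/nPh].
pose ext h m := e (h, m).
have ext_cylinder h m : cylinder h m (ext h m) := (e_spec (h, m)).1.
have P_prefix k : P (prefix ext h0 m0 k) (m0 + k%:Z).
  elim: k => [|k IH]; first by rewrite addr0.
  have -> : m0 + k.+1%:Z = m0 + k%:Z + 1 by lia.
  exact: (e_spec (_, _)).2 IH.
exists (branch ext h0 m0) => m le_m0m.
have -> : m = m0 + `|m - m0|%N by lia.
exact: P_cylinder (branch_cylinder h0 ext_cylinder (k := `|m - m0|%N)) (P_prefix _).
Qed.

End Branch.

Section ZTrc.
Variables (R : realType) (r c : R).
Local Notation S := (ZTrc r c).

Lemma ZTrc_closed f : (forall m, (S `&` cylinder f m) !=set0) -> S f.
Proof.
move=> S_near; split.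
  have [g [[[N gN] _] gf]] := S_near 0.
  exists (N - (`|N|%N)%:Z) => n lt_n; rewrite -gf ?gN //; lia.
move=> N K; have [g [[_ Sg] gf]] := S_near (N + K%:Z).
rewrite (eq_bigr (fun k : 'I_K => `|g (N + k%:Z)|%:~R * r ^ (N + k%:Z))).
  exact: Sg.
by move=> k _; rewrite gf //; have := ltn_ord k; lia.
Qed.

Hypothesis r_gt0 : 0 < r.

Lemma ZTrc_coef_le f n : S f -> `|f n|%:~R <= c / r ^ n.
Proof.
move=> [_ Sf]; rewrite ler_pdivlMr ?exprz_gt0 //.
by have := Sf n 1%N; rewrite big_ord1 addr0.
Qed.

Lemma ZTrc_coef_bounded n : exists B : nat, forall f, S f -> `|f n| <= B%:Z.
Proof.
exists (Num.bound `|c / r ^ n|) => f /(ZTrc_coef_le n) le_fn.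
have := le_lt_trans (le_trans le_fn (ler_norm _)) (archi_boundP (normr_ge0 _)).
by rewrite -natr_absz ltr_nat => /ltnW; rewrite -lez_nat abszE.
Qed.

Lemma ZTrc_coef_eq0 f n : c < r ^ n -> S f -> f n = 0.
Proof.
move=> lt_cr /(ZTrc_coef_le n) le_fn.
have : `|f n|%:~R < 1 :> R.
  by apply: le_lt_trans le_fn _; rewrite ltr_pdivrMr ?exprz_gt0 // mul1r.
by rewrite ltrz1; lia.
Qed.

Lemma ZTrc_sub_cylinder0 : r < 1 -> 0 < c ->
  exists m0 : int, S `<=` cylinder (fun=> 0) m0.
Proof.
move=> r_lt1 c_gt0.
have [m lt_rc] : exists m : int, forall n, m <= n -> r ^ n < c^-1.
  by apply: exprz_lt_eventually; rewrite ?invr_gt0.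
exists (- m) => f Sf n le_nm; apply: ZTrc_coef_eq0 Sf.
rewrite -[n]opprK -invr_expz -[c]invrK ltf_pV2 ?posrE ?invr_gt0 ?exprz_gt0 //.
by apply: lt_rc; rewrite lerNr.
Qed.

End ZTrc.

Lemma Tnorm_le (R : realType) (delta : R) (h : int -> int) (m : int) :
  0 < delta -> delta <= 1 -> (forall n, n <= m -> h n = 0) ->
  Tnorm delta h <= delta ^ (m + 1).
Proof.
move=> d_gt0 d_le1 h0; rewrite /Tnorm; case: pselect => [vP|_].
  case: (cid vP) => v [hv_neq0 _] /=.
  have le_mv : m + 1 <= v.
    by rewrite lezD1 ltNge; apply: contraNN hv_neq0 => /h0 ->.
  rewrite -[delta]invrK !(exprz_inv delta^-1).
  by apply: ler_weXz2l; rewrite ?lerN2 ?invf_ge1.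
exact: exprz_ge0 (ltW d_gt0).
Qed.

Lemma not_finitely_covered_extend (F : set (set (int -> int)))
    (S : set (int -> int)) (h : int -> int) (m : int) (B : nat) :
  (forall f, S f -> `|f (m + 1)| <= B%:Z) ->
  ~ finitely_covered F (S `&` cylinder h m) ->
  exists2 h', cylinder h m h' & ~ finitely_covered F (S `&` cylinder h' (m + 1)).
Proof.
move=> S_bnd ncov; apply: contrapT => all_cov; apply: ncov.
pose ext (x : int) := [eta h with m + 1 |-> x].
have ext_cov x : finitely_covered F (S `&` cylinder (ext x) (m + 1)).
  apply: contrapT => ncov; apply: all_cov; exists (ext x) => // n le_nm /=.
  by rewrite ifF //; apply/eqP; lia.
(* The coefficient x in [-B, B] is indexed by i = x + B < 2B + 1. *)
apply: finitely_covered_sub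
  (finitely_covered_bigcup (n := (B + B).+1)
     (fun i _ => ext_cov (i%:Z - B%:Z))) => f [Sf fh].
have le_fB := S_bnd f Sf.
exists (absz (f (m + 1) + B%:Z)); first by rewrite /=; lia.
split=> // n le_n /=; case: eqP => [->|ne_n]; first lia.
by apply: fh; lia.
Qed.

Theorem mainTheorem12 (R : realType) (r c delta : R) :
  0 < r -> r < 1 -> 0 < c -> 0 < delta -> delta < 1 ->
  Tcompact delta (ZTrc r c).
Proof.
move=> r_gt0 r_lt1 c_gt0 d_gt0 d_lt1 F F_open F_cover.
apply: contrapT => ncov.
have [m0 S_m0] := ZTrc_sub_cylinder0 r_gt0 r_lt1 c_gt0.
pose P h m := ~ finitely_covered F (ZTrc r c `&` cylinder h m).
have le_m0_max k : m0 <= Num.max m0 k by lia.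
have [f Pf] : exists f, forall m, m0 <= m -> P f m.
  apply: (@exists_branch _ P _ _ (fun=> 0)).
  - by move=> h h' m /cylinder_eq; rewrite /P => ->.
  - move=> h m; have [B S_bnd] := ZTrc_coef_bounded c r_gt0 (m + 1).
    exact: not_finitely_covered_extend S_bnd.
  - by rewrite /P setIidl.
have Sf : ZTrc r c f.
  apply: ZTrc_closed => m.
  have /not_finitely_covered_neq0 [g [Sg gf]] := Pf _ (le_m0_max m).
  by exists g; split=> //; apply: cylinder_le gf; lia.
have [U FU Uf] := F_cover f Sf.
have [e e_gt0 ball_e] := F_open U FU f Sf.1 Uf.
have [m dm] := exprz_lt_eventually d_gt0 d_lt1 e_gt0.
apply: (Pf _ (le_m0_max m)).
apply: finitely_covered1 FU _ => g [Sg gf]; apply: ball_e Sg.1 _.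
apply: le_lt_trans (Tnorm_le _ (ltW d_lt1) _) (dm _ _) => //.
  by move=> n /gf ->; rewrite subrr.
lia.
Qed.
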